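(* Let $F\in\mathbb{R}[x_1,\dots,x_n]$ be a form that is indefinite on $\mathbb{T}_n=\{(x_1,\dots,x_n): x_i\ge0,\ \sum_i x_i=1\}$, i.e., there exist $X,Y\in\mathbb{T}_n$ with $F(X)>0$ and $F(Y)<0$. Then the sequence of sets $\{\mathrm{SDS}^{(m)}(F)\}_{m\ge1}$ is negatively terminating, i.e., there exist a positive integer $k$ and a form $G\in\mathrm{SDS}^{(k)}(F)$ with $G(1,1,\dots,1)<0$.
   Context: $W_n$ is the $n\times n$ matrix with $(W_n)_{ij}=1/j$ for $i\le j$ and $0$ for $i>j$. For a permutation $[k_1\cdots k_n]$ of $1,\dots,n$, $P_{[k_1\cdots k_n]}$ is the permutation matrix with $1$ in positions $(i,k_i)$ and $0$ elsewhere, and $B_{[k_1\cdots k_n]}=P_{[k_1\cdots k_n]}W_n$; $PW_n$ denotes the set of these $n!$ matrices. For $m\ge1$, $\mathrm{SDS}^{(m)}(F)$ is the set of forms $F(B_{[\alpha_1]}B_{[\alpha_2]}\cdots B_{[\alpha_m]}X^{\mathrm{Tr}})$, $X=(x_1,\dots,x_n)$, as $B_{[\alpha_1]},\dots,B_{[\alpha_m]}$ range independently over $PW_n$. *)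

From HB Require Import structures.
From mathcomp Require Import all_boot all_order all_algebra all_fingroup.
From mathcomp Require Import reals.
From mathcomp Require Import mpoly.
Set Implicit Arguments. Unset Strict Implicit. Unset Printing Implicit Defensive.
Import Order.TTheory GRing.Theory Num.Theory.
Local Open Scope ring_scope.

Section SDS.
Variables (R : realType) (n : nat).

Definition Wmx : 'M[R]_n :=
  \matrix_(i < n, j < n) (if (i <= j)%N then (j.+1%:R)^-1 else 0).

(* P_{[k_1..k_n]}: entry (i, k_i) is 1, others 0, where k_i = s i. *)
Definition Pmx (s : 'S_n) : 'M[R]_n :=
  \matrix_(i < n, j < n) (if s i == j then 1 else 0).

Definition Bmx (s : 'S_n) : 'M[R]_n := Pmx s *m Wmx.

Definition Bprod (ss : seq 'S_n) : 'M[R]_n :=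
  foldr (fun s M => Bmx s *m M) 1%:M ss.

Definition sub_form (F : {mpoly R[n]}) (M : 'M[R]_n) : {mpoly R[n]} :=
  F \mPo [tuple \sum_(j < n) M i j *: 'X_j | i < n].

Definition in_SDS (m : nat) (F G : {mpoly R[n]}) : Prop :=
  exists ss : seq 'S_n, size ss = m /\ G = sub_form F (Bprod ss).

Definition in_simplex (x : 'I_n -> R) : Prop :=
  (forall i, 0 <= x i) /\ \sum_(i < n) x i = 1.

End SDS.

(* Every B_s is column stochastic, so a point of the simplex is B_s y' for some
   y' in the simplex (sort the coordinates decreasingly and take differences);
   iterating, Y = B_{s_1} ... B_{s_m} y with y in the simplex.  Right
   multiplication by B_s contracts the oscillation of each row of a matrix by
   the factor 1 - 1/n, so the rows of M = B_{s_1} ... B_{s_m} are nearly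
   constant.  Since y has coordinate sum 1, each (M 1)_i is then close to
   n (M y)_i = n Y_i, and G(1) = F(M 1) is close to F(n Y) = n^d F(Y) < 0. *)
From HB Require Import structures.
From mathcomp Require Import all_boot all_order all_algebra all_fingroup.
From mathcomp Require Import reals.
From mathcomp Require Import mpoly.
From mathcomp Require Import ring lra.
Import Order.TTheory GRing.Theory Num.Theory.
Local Open Scope ring_scope.
Set Implicit Arguments. Unset Strict Implicit. Unset Printing Implicit Defensive.

Section Evaluation.
Variables (R : realType) (n : nat).

Lemma meval_sub_form (F : {mpoly R[n]}) (M : 'M[R]_n) v :
  (sub_form F M).@[v] = F.@[fun i => \sum_j M i j * v j].
Proof.
rewrite /sub_form comp_mpoly_meval; apply: meval_eq => i.
rewrite tnth_mktuple raddf_sum; apply: eq_bigr => j _ /=.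
by rewrite (mevalZ v (M i j) 'X_j) mevalXU.
Qed.

Lemma meval_dhomogZ (F : {mpoly R[n]}) d (c : R) v : F \is d.-homog ->
  F.@[fun i => c * v i] = c ^+ d * F.@[v].
Proof.
move=> hF; rewrite !mevalE mulr_sumr; apply: eq_big_seq => m hm.
rewrite mulrCA; congr (_ * _).
under eq_bigr do rewrite exprMn.
rewrite big_split /= prodrXr -(dhomog_mf hF hm).
by congr (_ ^+ _ * _); exact: (esym (mdegE m)).
Qed.

End Evaluation.

Section LocallyLipschitz.
Variables (R : realType) (n : nat) (Y : 'I_n -> R).

Definition lipschitz_at (f : ('I_n -> R) -> R) :=
  exists C, 0 <= C /\ forall (e : R) x, 0 <= e <= 1 ->
    (forall i, `|x i - Y i| <= e) -> `|f x - f Y| <= C * e.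

Lemma eq_lipschitz_at f g : f =1 g -> lipschitz_at f -> lipschitz_at g.
Proof.
by move=> fg [C [C0 hf]]; exists C; split => // e x he hx; rewrite -!fg; apply: hf.
Qed.

Lemma lipschitz_at_cst c : lipschitz_at (fun _ => c).
Proof. by exists 0; split => // e x _ _; rewrite subrr normr0 mul0r. Qed.

Lemma lipschitz_at_coord i : lipschitz_at (fun x => x i).
Proof. by exists 1; split => // e x _ h; rewrite mul1r. Qed.

Lemma lipschitz_atD f g :
  lipschitz_at f -> lipschitz_at g -> lipschitz_at (fun x => f x + g x).
Proof.
move=> [Cf [Cf0 hf]] [Cg [Cg0 hg]]; exists (Cf + Cg); split; first exact: addr_ge0.
move=> e x he hx; rewrite mulrDl.
have -> : f x + g x - (f Y + g Y) = (f x - f Y) + (g x - g Y) by ring.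
by apply: le_trans (ler_normD _ _) _; apply: lerD; [apply: hf | apply: hg].
Qed.

Lemma lipschitz_atM f g :
  lipschitz_at f -> lipschitz_at g -> lipschitz_at (fun x => f x * g x).
Proof.
move=> [Cf [Cf0 hf]] [Cg [Cg0 hg]].
exists ((`|f Y| + Cf) * Cg + `|g Y| * Cf); split.
  by apply: addr_ge0; apply: mulr_ge0 => //; apply: addr_ge0.
move=> e x he hx.
have -> : f x * g x - f Y * g Y = f x * (g x - g Y) + g Y * (f x - f Y) by ring.
apply: le_trans (ler_normD _ _) _; rewrite mulrDl; apply: lerD; rewrite normrM.
- have fx_le : `|f x| <= `|f Y| + Cf.
    have := ler_normD (f x - f Y) (f Y); rewrite subrK => h.
    apply: le_trans h _; rewrite addrC lerD2l; apply: le_trans (hf _ _ he hx) _.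
    by case/andP: he => _ he1; rewrite ler_piMr.
  by rewrite -mulrA; apply: ler_pM => //; apply: hg.
- by rewrite -mulrA; apply: ler_wpM2l => //; apply: hf.
Qed.

Lemma lipschitz_at_sum (I : Type) (s : seq I) (P : pred I) f :
  (forall a : I, lipschitz_at (f a)) ->
  lipschitz_at (fun x => \sum_(a <- s | P a) f a x).
Proof.
move=> hf; elim: s => [|a s IH].
  by apply: (@eq_lipschitz_at (fun=> 0)) (lipschitz_at_cst _) => x; rewrite big_nil.
have [Pa|nPa] := boolP (P a).
  by apply: eq_lipschitz_at (lipschitz_atD (hf a) IH) => x; rewrite big_cons Pa.
by apply: eq_lipschitz_at IH => x; rewrite big_cons (negbTE nPa).
Qed.

Lemma lipschitz_at_prod (I : Type) (s : seq I) (P : pred I) f :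
  (forall a : I, lipschitz_at (f a)) ->
  lipschitz_at (fun x => \prod_(a <- s | P a) f a x).
Proof.
move=> hf; elim: s => [|a s IH].
  by apply: (@eq_lipschitz_at (fun=> 1)) (lipschitz_at_cst _) => x; rewrite big_nil.
have [Pa|nPa] := boolP (P a).
  by apply: eq_lipschitz_at (lipschitz_atM (hf a) IH) => x; rewrite big_cons Pa.
by apply: eq_lipschitz_at IH => x; rewrite big_cons (negbTE nPa).
Qed.

Lemma lipschitz_atX f k : lipschitz_at f -> lipschitz_at (fun x => f x ^+ k).
Proof.
move=> hf; elim: k => [|k IH].
  by apply: (@eq_lipschitz_at (fun=> 1)) (lipschitz_at_cst _) => x; rewrite expr0.
by apply: eq_lipschitz_at (lipschitz_atM hf IH) => x; rewrite exprS.
Qed.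

Lemma lipschitz_at_meval (F : {mpoly R[n]}) : lipschitz_at (fun x => F.@[x]).
Proof.
apply: (@eq_lipschitz_at
  (fun x => \sum_(m <- msupp F) F@_m * \prod_i x i ^+ m i)) => [x|].
  by rewrite mevalE.
apply: lipschitz_at_sum => m; apply: lipschitz_atM; first exact: lipschitz_at_cst.
by apply: lipschitz_at_prod => i; apply: lipschitz_atX; apply: lipschitz_at_coord.
Qed.

Lemma meval_lt0_near (F : {mpoly R[n]}) : F.@[Y] < 0 ->
  exists2 e : R, 0 < e & forall x, (forall i, `|x i - Y i| <= e) -> F.@[x] < 0.
Proof.
move=> FY_lt0; have [C [C0 hC]] := lipschitz_at_meval F.
pose d := - F.@[Y] / (C + 1).
have d_gt0 : 0 < d by rewrite divr_gt0 ?oppr_gt0 ?ltr_wpDl.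
have Cd_lt : C * d < - F.@[Y].
  by rewrite /d mulrA ltr_pdivrMr ?ltr_wpDl // mulrDr mulr1 mulrC ltrDl oppr_gt0.
exists (Num.min 1 d) => [|x hx]; first by rewrite lt_min ltr01 d_gt0.
have e01 : 0 <= Num.min 1 d <= 1 by rewrite ge_min lexx le_min ler01 ltW.
have Ce_le : C * Num.min 1 d <= C * d by rewrite ler_wpM2l // ge_min lexx orbT.
have := le_trans (ler_norm _) (hC _ _ e01 hx); lra.
Qed.

End LocallyLipschitz.

Section RowOscillation.
Variables (R : realType) (n : nat).

Definition row_osc_le (M : 'M[R]_n) (e : R) := forall i j k, M i j - M i k <= e.

Lemma maxr0_opp (x : R) : Num.max x 0 = x + Num.max (- x) 0.
Proof. by rewrite /Num.max; case: (ltP x 0); case: (ltP (- x) 0); lra. Qed.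

(* Dobrushin's ergodicity-coefficient argument. *)
Lemma row_osc_le_mulmx (M B : 'M[R]_n) e delta :
  (forall j k, \sum_l B l j = \sum_l B l k) ->
  (forall j k, \sum_l Num.max (B l j - B l k) 0 <= delta) ->
  row_osc_le M e -> row_osc_le (M *m B) (delta * e).
Proof.
move=> colsum posmass hM i j k.
have e_ge0 : 0 <= e by have := hM i j j; rewrite subrr.
pose d l := B l j - B l k.
have sum_d : \sum_l d l = 0 by rewrite sumrB (colsum j k) subrr.
pose lo := M i [arg min_(l < j) M i l]%O.
have lo_le l : lo <= M i l by rewrite /lo; case: arg_minP => // m _; apply.
have le_lo l : M i l - lo <= e by apply: hM.
(* Subtracting the row minimum does not change the result since sum_l d l = 0. *)
have -> : (M *m B) i j - (M *m B) i k = \sum_l (M i l - lo) * d l.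
  under [RHS]eq_bigr do rewrite mulrBl.
  rewrite sumrB -mulr_sumr sum_d mulr0 subr0 !mxE -sumrB.
  by apply: eq_bigr => l _; rewrite mulrBr.
apply: (@le_trans _ _ (\sum_l e * Num.max (d l) 0)).
  apply: ler_sum => l _; have := lo_le l; have := le_lo l.
  by rewrite /Num.max; case: (ltP (d l) 0) => h1 h2 h3; nra.
by rewrite -mulr_sumr mulrC ler_wpM2r // posmass.
Qed.

End RowOscillation.

Section BMatrices.
Variables (R : realType) (n : nat).

Lemma BmxE (s : 'S_n) l j :
  Bmx R s l j = if (s l <= j)%N then (j.+1%:R)^-1 else 0.
Proof.
rewrite /Bmx mxE (bigD1 (s l)) //= !mxE eqxx mul1r big1 ?addr0 // => r hr.
by rewrite mxE eq_sym (negbTE hr) mul0r.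
Qed.

Lemma Bmx_ge0 (s : 'S_n) l j : 0 <= Bmx R s l j.
Proof. by rewrite BmxE; case: ifP => // _; rewrite invr_ge0 ler0n. Qed.

Lemma Bmx_colsum (s : 'S_n) j : \sum_l Bmx R s l j = 1.
Proof.
under eq_bigr do rewrite BmxE.
rewrite (reindex_inj (@perm_inj _ s^-1)) /=.
under eq_bigr do rewrite permKV.
rewrite -big_mkcond /= -(big_ord_widen _ (fun _ => j.+1%:R^-1) (ltn_ord j)).
by rewrite sumr_const card_ord -(mulr_natr (j.+1%:R^-1)) mulVf ?pnatr_eq0.
Qed.

(* In the row l0 = s^-1 0, column j has the entry 1/(j+1) >= 1/n, which is at
   most the entry 1/(k+1) of column k; so that mass is missing from the sum. *)
Lemma Bmx_posmass_le (s : 'S_n) (j k : 'I_n) : (k <= j)%N ->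
  \sum_l Num.max (Bmx R s l j - Bmx R s l k) 0 <= 1 - n%:R^-1.
Proof.
move=> le_kj; have n_gt0 : (0 < n)%N by apply: leq_ltn_trans (ltn_ord j).
pose l0 := (s^-1)%g (Ordinal n_gt0).
have s_l0 : s l0 = Ordinal n_gt0 by rewrite /l0 permKV.
apply: (@le_trans _ _ (\sum_l (if l == l0 then 0 else Bmx R s l j))).
  apply: ler_sum => l _; case: eqP => [->|_]; last first.
    by rewrite ge_max Bmx_ge0 andbT gerBl Bmx_ge0.
  rewrite ge_max lexx andbT !BmxE s_l0 /=.
  by rewrite subr_le0 lef_pV2 ?posrE ?ltr0Sn // ler_nat ltnS.
have := Bmx_colsum s j; rewrite (bigD1 l0) //= => colsum.
rewrite (bigD1 l0) //= eqxx add0r.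
under eq_bigr => l /negbTE -> do [].
have -> : \sum_(l | l != l0) Bmx R s l j = 1 - Bmx R s l0 j.
  by rewrite -colsum addrC addrK.
rewrite lerD2l lerN2 BmxE s_l0 /= lef_pV2 ?posrE ?ltr0Sn ?ltr0n //.
by rewrite ler_nat.
Qed.

Lemma Bmx_posmass (s : 'S_n) (j k : 'I_n) :
  \sum_l Num.max (Bmx R s l j - Bmx R s l k) 0 <= 1 - n%:R^-1.
Proof.
have [le_kj|lt_jk] := leqP k j; first exact: Bmx_posmass_le.
under eq_bigr do rewrite maxr0_opp opprB.
rewrite big_split /= sumrB !Bmx_colsum subrr add0r.
exact/Bmx_posmass_le/ltnW.
Qed.

Lemma Bprod_rcons (ss : seq 'S_n) s : Bprod R (rcons ss s) = Bprod R ss *m Bmx R s.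
Proof.
by elim: ss => [|a ss IH] /=; rewrite /Bprod /= ?mulmx1 ?mul1mx // -/(Bprod R _) IH mulmxA.
Qed.

Lemma row_osc_Bprod (ss : seq 'S_n) :
  row_osc_le (Bprod R ss) ((1 - n%:R^-1) ^+ size ss).
Proof.
elim/last_ind: ss => [|ss s IH].
  by move=> i j k; rewrite /Bprod /= expr0 !mxE; case: eqP; case: eqP => /=; lra.
rewrite Bprod_rcons size_rcons exprS; apply: row_osc_le_mulmx IH.
  by move=> j k; rewrite !Bmx_colsum.
exact: Bmx_posmass.
Qed.

End BMatrices.

Section SimplexCover.
Variables (R : realType) (N : nat).
Local Notation n := N.+1.

Lemma exists_perm_sort_decr (y : 'I_n -> R) :
  exists t : 'S_n, forall p q : 'I_n, (p <= q)%N -> y (t q) <= y (t p).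
Proof.
pose geY a b := y b <= y a.
pose r := sort geY (enum 'I_n).
have size_r : size r = n by rewrite size_sort size_enum_ord.
have uniq_r : uniq r by rewrite sort_uniq enum_uniq.
have sorted_r : sorted geY r by apply: sort_sorted => a b; apply: le_total.
have nth_inj : injective (fun p : 'I_n => nth ord0 r p).
  by move=> p q /eqP; rewrite nth_uniq ?size_r // => /eqP /val_inj.
exists (perm nth_inj) => p q le_pq; rewrite !permE.
apply: (sorted_leq_nth _ _ ord0 sorted_r); rewrite ?inE ?size_r //.
- by move=> a b c; rewrite /geY => h1 h2; apply: le_trans h2 h1.
- by move=> a; rewrite /geY.
Qed.

(* With y sorted decreasingly along t, y = B_{t^-1} y' where
   y'_j = (j+1) (y_{t j} - y_{t (j+1)}), reading y_{t n} as 0. *)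
Lemma simplex_Bmx_preimage (y : 'I_n -> R) : in_simplex y ->
  exists s : 'S_n, exists2 y' : 'I_n -> R, in_simplex y' &
    forall i, y i = \sum_j Bmx R s i j * y' j.
Proof.
move=> [y_ge0 y_sum1]; have [t t_decr] := exists_perm_sort_decr y.
pose V k := if (k < n)%N then y (t (inord k)) else 0.
pose y' (j : 'I_n) := j.+1%:R * (V j - V j.+1).
have V_decr k : V k.+1 <= V k.
  rewrite /V; case: (ltnP k.+1 n) => [lt_k1n|_]; last by case: ifP.
  by rewrite (ltnW lt_k1n) t_decr // !inordK // ltnW.
have y_rep i : y i = \sum_j Bmx R (t^-1) i j * y' j.
  have term j : Bmx R (t^-1) i j * y' j =
      if (t^-1%g i <= j)%N then V j - V j.+1 else 0.
    by rewrite BmxE /y'; case: ifP; rewrite ?mul0r // mulrA mulVf ?mul1r ?pnatr_eq0.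
  under eq_bigr do rewrite term.
  rewrite -big_mkcond /= -(big_geq_mkord _ _ xpredT (fun j => V j - V j.+1)).
  under eq_bigr do rewrite -(opprK (V _)) addrC.
  rewrite telescope_sumr; last exact: ltnW.
  by rewrite /V ltnn ltn_ord inord_val permKV opprK addrC subr0.
exists t^-1%g; exists y' => //; split.
  by move=> j; rewrite mulr_ge0 ?ler0n // subr_ge0.
rewrite -y_sum1; under [RHS]eq_bigr do rewrite y_rep.
rewrite exchange_big; apply: eq_bigr => j _.
by rewrite -mulr_suml Bmx_colsum mul1r.
Qed.

Lemma simplex_Bprod_preimage (Y : 'I_n -> R) (m : nat) : in_simplex Y ->
  exists ss : seq 'S_n, size ss = m /\ exists2 y : 'I_n -> R, in_simplex y &
    forall i, Y i = \sum_j Bprod R ss i j * y j.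
Proof.
move=> hY; elim: m => [|m [ss [size_ss [y hy Y_rep]]]].
  exists [::]; split => //; exists Y => // i.
  rewrite /Bprod /= (bigD1 i) //= big1 ?addr0 ?mxE ?eqxx ?mul1r // => j hj.
  by rewrite mxE eq_sym (negbTE hj) mul0r.
have [s [y' hy' y_rep]] := simplex_Bmx_preimage hy.
exists (rcons ss s); split; first by rewrite size_rcons size_ss.
exists y' => // i; rewrite Y_rep Bprod_rcons.
under eq_bigr do rewrite y_rep mulr_sumr.
rewrite exchange_big; apply: eq_bigr => l _.
by rewrite mxE mulr_suml; apply: eq_bigr => j _; rewrite mulrA.
Qed.

End SimplexCover.

(* Since y has mass 1, the constant vector 1 and n y agree on constants, so a
   row with oscillation e gives nearly the same value on both. *)
Lemma row_osc_mulmx_simplex (R : realType) n (M : 'M[R]_n) e y i :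
  row_osc_le M e -> in_simplex y ->
  `|\sum_j M i j - n%:R * \sum_j M i j * y j| <= 2 * n%:R * e.
Proof.
move=> hM [y_ge0 y_sum1].
have dev_sum0 : \sum_j (1 - n%:R * y j) = 0 :> R.
  by rewrite sumrB sumr_const card_ord -mulr_sumr y_sum1 mulr1 subrr.
have -> : \sum_j M i j - n%:R * \sum_j M i j * y j
    = \sum_j (M i j - M i i) * (1 - n%:R * y j).
  under [RHS]eq_bigr do rewrite mulrBl.
  rewrite sumrB -mulr_sumr dev_sum0 mulr0 subr0 mulr_sumr -sumrB.
  by apply: eq_bigr => j _; rewrite mulrBr mulr1 mulrCA.
apply: le_trans (ler_norm_sum _ _ _) _.
apply: (@le_trans _ _ (\sum_j e * (1 + n%:R * y j))).
  apply: ler_sum => j _; rewrite normrM.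
  have ny_ge0 : 0 <= n%:R * y j by rewrite mulr_ge0.
  have osc_le : `|M i j - M i i| <= e by rewrite ler_norml; have := hM i i j; have := hM i j i; lra.
  by apply: ler_pM => //; rewrite ler_norml; lra.
rewrite -mulr_sumr big_split /= sumr_const card_ord -mulr_sumr y_sum1 mulr1.
lra.
Qed.

Lemma expr_ratio_bound (R : realType) N m :
  (1 - (N.+1%:R : R)^-1) ^+ m * (N%:R + m%:R) <= N%:R.
Proof.
set q := 1 - _.
have qN : q * N.+1%:R = N%:R by rewrite mulrBl mul1r mulVf ?pnatr_eq0 // mulrS; lra.
have q_ge0 : 0 <= q by rewrite subr_ge0 invf_le1 ?ltr0Sn // ler1n.
have q_le1 : q <= 1 by rewrite gerBl invr_ge0 ler0n.
elim: m => [|m IH]; first by rewrite expr0 mul1r addr0.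
have qm_ge0 : 0 <= q ^+ m by rewrite exprn_ge0.
have qm_le1 : q ^+ m <= 1 by rewrite exprn_ile1.
have := ler_wpM2l q_ge0 IH; move: qN; rewrite exprS (mulrS _ m) (mulrS _ N); nra.
Qed.

Lemma exists_expr_ratio_le (R : realType) N (e : R) : 0 < e ->
  exists2 m, (0 < m)%N & (1 - (N.+1%:R : R)^-1) ^+ m <= e.
Proof.
move=> e_gt0; set q := 1 - _.
pose m := (Num.Def.archi_bound (N%:R / e)).+1.
have Nm : N%:R < m%:R * e.
  rewrite -ltr_pdivrMr //; apply: lt_le_trans (archi_boundP _) _.
    by rewrite divr_ge0 // ltW.
  by rewrite ler_nat.
exists m => //; have := expr_ratio_bound R N m; rewrite -/q.
have qm_ge0 : 0 <= q ^+ m by rewrite exprn_ge0 // subr_ge0 invf_le1 ?ltr0Sn // ler1n.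
have : 0 <= (N%:R : R) by [].
have : 0 <= (m%:R : R) by [].
nra.
Qed.

Theorem theorem5p1 (R : realType) (n d : nat) (F : {mpoly R[n]})
  (hF : F \is d.-homog) (X Y : 'I_n -> R)
  (hX : in_simplex X) (hY : in_simplex Y)
  (hFX : 0 < F.@[X]) (hFY : F.@[Y] < 0) :
  exists k : nat, (0 < k)%N /\
    exists G : {mpoly R[n]}, in_SDS k F G /\ G.@[fun _ => 1] < 0.
Proof.
(* Only the negative value F(Y) matters. *)
case: n F hF X Y hX hY hFX hFY => [|N] F hF X Y hX hY _ hFY.
  by case: hY => _; rewrite big_ord0 => /eqP; rewrite eq_sym oner_eq0.
pose c : R := N.+1%:R.
have c_gt0 : 0 < c by rewrite ltr0n.
have hFcY : F.@[fun i => c * Y i] < 0.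
  by rewrite (meval_dhomogZ _ _ hF) pmulr_rlt0 // exprn_gt0.
have [eps eps_gt0 F_lt0_near] := meval_lt0_near hFcY.
have [m m_gt0 qm_le] :=
  exists_expr_ratio_le N (divr_gt0 eps_gt0 (mulr_gt0 (ltr0Sn _ 1) c_gt0)).
have [ss [size_ss [y hy Y_rep]]] := simplex_Bprod_preimage m hY.
exists m; split => //; exists (sub_form F (Bprod R ss)); split; first by exists ss.
rewrite meval_sub_form; apply: F_lt0_near => i; rewrite Y_rep.
under eq_bigr do rewrite mulr1.
apply: le_trans (row_osc_mulmx_simplex i (row_osc_Bprod R ss) hy) _.
by rewrite size_ss -/c mulrC -ler_pdivlMr ?mulr_gt0.
Qed.
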